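(* Let $\alpha\in(0,1)$ and let $\phi:[0,1]\to[0,\infty)$ be four times continuously differentiable on $(0,1]$ with finite constants $W>0$, $c$, $c'$ such that $(2-\alpha)(3-\alpha)(4-\alpha)Wp^{\alpha-4}+c'\le|\phi^{(4)}(p)|\le(2-\alpha)(3-\alpha)(4-\alpha)Wp^{\alpha-4}+c$ for all $p\in(0,1]$. Let $n\ge1$, and $\Delta,p$ with $\frac1n\lesssim\Delta<p\le1$, and let $\tilde N\sim\mathrm{Poisson}(np)$. Then $$\mathrm{Var}\Big[\bar\phi_\Delta\Big(\frac{\tilde N}{n}\Big)-\frac{\tilde N}{2n^2}\bar\phi_\Delta^{(2)}\Big(\frac{\tilde N}{n}\Big)-\phi(p)+\frac{p\phi^{(2)}(p)}{2n}\Big]\lesssim\frac{p^{2\alpha-1}}{n}+\frac{1}{n^4\Delta^{4-2\alpha}}+\frac pn.$$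
   Context: For the Bernstein basis $B_{\nu,N}(t)=\binom N\nu t^\nu(1-t)^{N-\nu}$ define $H_L(x;\phi,a,b)=\phi(a)+\sum_{m=1}^L\frac{\phi^{(m)}(a)}{m!}(x-a)^m\sum_{\ell=0}^{L-m}\frac{L+1}{L+\ell+1}B_{\ell,L+\ell+1}\big(\tfrac{x-a}{b-a}\big)$ (derivatives at $1$ are one-sided). For $\Delta\in(0,1]$, $\bar\phi_\Delta:[0,\infty)\to\mathbb{R}$ is $\bar\phi_\Delta(x)=H_4(\Delta/2;\phi,\Delta,\Delta/2)$ if $x\le\Delta/2$; $H_4(x;\phi,\Delta,\Delta/2)$ if $\Delta/2<x<\Delta$; $\phi(x)$ if $\Delta\le x\le1$; $H_4(x;\phi,1,2)$ if $1<x<2$; $H_4(2;\phi,1,2)$ if $x\ge2$; $\bar\phi^{(2)}_\Delta$ is its second derivative. $a\lesssim b$ means $a\le Cb$ for a positive constant $C$ not depending on $n,\Delta,p$ (possibly on $\phi,\alpha$); $\frac1n\lesssim\Delta$ means $\Delta\ge c_0/n$ for a fixed constant $c_0>0$. *)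

From Stdlib Require Import Reals.
From Coquelicot Require Import Coquelicot.
Open Scope R_scope.

Definition bernstein (nu N : nat) (t : R) : R :=
  Binomial.C N nu * t ^ nu * (1 - t) ^ (N - nu).

(* H_L(x; phi, a, b), where dphi m a stands for phi^{(m)}(a) (m >= 1). *)
Definition H (L : nat) (phi : R -> R) (dphi : nat -> R -> R) (a b x : R) : R :=
  phi a +
  sum_f 1 L (fun m =>
    dphi m a / INR (Factorial.fact m) * (x - a) ^ m *
    sum_f_R0 (fun l => INR (L + 1) / INR (L + l + 1)
                        * bernstein l (L + l + 1) ((x - a) / (b - a))) (L - m)).

(* \bar phi_Delta, defined on all of R (the first branch also covers x < 0,
   which is irrelevant since it is only evaluated at x >= 0). *)
Definition phibar (phi : R -> R) (dphi : nat -> R -> R) (D : R) (x : R) : R :=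
  if Rle_dec x (D / 2) then H 4 phi dphi D (D / 2) (D / 2)
  else if Rlt_dec x D then H 4 phi dphi D (D / 2) x
  else if Rle_dec x 1 then phi x
  else if Rlt_dec x 2 then H 4 phi dphi 1 2 x
  else H 4 phi dphi 1 2 2.

Definition phibar2 (phi : R -> R) (dphi : nat -> R -> R) (D : R) (x : R) : R :=
  Derive_n (phibar phi dphi D) 2 x.

Definition I01 (y : R) : Prop := 0 < y <= 1.

Definition deriv_within01 (g : R -> R) (g'x : R) (x : R) : Prop :=
  filterlim (fun y => (g y - g x) / (y - x))
    (within (fun y => I01 y /\ y <> x) (locally x)) (locally g'x).

Definition cont_within01 (g : R -> R) (x : R) : Prop :=
  filterlim g (within I01 (locally x)) (locally (g x)).

Definition poisson_pmf (lam : R) (k : nat) : R :=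
  exp (- lam) * lam ^ k / INR (Factorial.fact k).

Definition poisson_mean (lam : R) (g : nat -> R) : R :=
  Series (fun k => poisson_pmf lam k * g k).

Definition poisson_var (lam : R) (g : nat -> R) : R :=
  Series (fun k => poisson_pmf lam k * (g k - poisson_mean lam g) ^ 2).

From Stdlib Require Import Reals Lra Lia Factorial List.
From Coquelicot Require Import Coquelicot.
Open Scope R_scope.

(* Integrating |phi^(4)(x)| <= K x^(alpha-4) three times from 1 downwards gives
   |phi^(m)(x)| <= K x^(alpha-m) for m = 1..4 and |phi z - phi y| <= K z^alpha.  On the
   pieces [Delta/2, Delta] and [1, 2] the smoothing phibar is the polynomial H_4, whose j-th
   derivative is sum_m phi^(m)(a) s^(m-j) q_m^(j)((x-a)/s) for four fixed polynomials q_m;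
   on the left piece it is therefore O(Delta^(alpha-j)).  Writing x = k/n, the summand is
   U - V/(2n) + Y/(2n) with U = phibar x - phi p, V = x phibar'' x and Y = p phi'' p.  For
   x >= p/2, phibar is O(p^(alpha-1))-Lipschitz between x and p and V = O(p^(alpha-1)); for
   x < p/2, U = O(p^alpha) and V = O(Delta^(alpha-1)); always Y = O(p^(alpha-1)).  Bounding
   the variance by the second moment of this envelope, E (N/n - p)^2 = p/n and
   E exp(np/2 - N) = exp(-(1/2 - 1/e) np) give the rate, because (np)^m exp(-c np) is
   bounded and np >= c0. *)

(** * Poisson moments *)

(* Coquelicot states these for an arbitrary normed module; fixing the carrier to R lets
   [ring] and [field] work on the resulting equations. *)
Lemma is_series_R_lin (a b : nat -> R) (la lb c1 c2 : R) :
  is_series a la -> is_series b lb ->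
  is_series (fun k => c1 * a k + c2 * b k) (c1 * la + c2 * lb).
Proof.
  intros Ha Hb.
  exact (is_series_plus (V := R_NormedModule) _ _ _ _
    (is_series_scal_l (V := R_NormedModule) c1 _ _ Ha)
    (is_series_scal_l (V := R_NormedModule) c2 _ _ Hb)).
Qed.

Lemma is_series_R_ext (a b : nat -> R) (l : R) :
  is_series a l -> (forall k, a k = b k) -> is_series b l.
Proof. intros Ha E. exact (is_series_ext a b l E Ha). Qed.

Lemma is_series_R_scal (c : R) (a : nat -> R) (l : R) :
  is_series a l -> is_series (fun k => c * a k) (c * l).
Proof. exact (is_series_scal_l (V := R_NormedModule) c a l). Qed.

Lemma is_series_exp x : is_series (fun k => x ^ k / INR (fact k)) (exp x).
Proof.
  eapply is_series_ext; [| exact (is_exp_Reals x)].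
  intro k. simpl. rewrite pow_n_pow. reflexivity.
Qed.

Lemma poisson_pmf_ge0 lam k : 0 <= lam -> 0 <= poisson_pmf lam k.
Proof.
  intro Hlam. unfold poisson_pmf.
  apply Rmult_le_pos; [apply Rmult_le_pos; [left; apply exp_pos | now apply pow_le] |].
  left. apply Rinv_0_lt_compat, INR_fact_lt_0.
Qed.

Lemma poisson_pmf_succ lam k :
  poisson_pmf lam (S k) * INR (S k) = lam * poisson_pmf lam k.
Proof.
  unfold poisson_pmf. rewrite fact_simpl, mult_INR. simpl pow.
  assert (INR (S k) <> 0) by (apply not_0_INR; lia).
  assert (INR (fact k) <> 0) by apply INR_fact_neq_0.
  field. auto.
Qed.

Lemma is_series_poisson_pgf lam z :
  is_series (fun k => poisson_pmf lam k * z ^ k) (exp (lam * (z - 1))).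
Proof.
  replace (exp (lam * (z - 1))) with (exp (- lam) * exp (lam * z))
    by (rewrite <- exp_plus; f_equal; ring).
  apply (is_series_R_ext _ _ _ (is_series_R_scal (exp (- lam)) _ _ (is_series_exp (lam * z)))).
  intro k. unfold poisson_pmf. rewrite Rpow_mult_distr. unfold Rdiv. ring.
Qed.

Lemma is_series_poisson_pmf lam : is_series (poisson_pmf lam) 1.
Proof.
  replace 1 with (exp (lam * (1 - 1))) by (rewrite Rminus_diag, Rmult_0_r; apply exp_0).
  apply (is_series_R_ext _ _ _ (is_series_poisson_pgf lam 1)).
  intro k. rewrite pow1. apply Rmult_1_r.
Qed.

Lemma is_series_shift (a : nat -> R) (l : R) :
  is_series (fun k => a (S k)) (l - a 0%nat) -> is_series a l.
Proof. exact (is_series_decr_1 (V := R_NormedModule) a l). Qed.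

Lemma is_series_poisson_mean lam : is_series (fun k => poisson_pmf lam k * INR k) lam.
Proof.
  apply is_series_shift. replace (lam - poisson_pmf lam 0 * INR 0) with (lam * 1) by (simpl; ring).
  apply (is_series_R_ext _ _ _ (is_series_R_scal lam _ _ (is_series_poisson_pmf lam))).
  intro k. symmetry. apply poisson_pmf_succ.
Qed.

Lemma is_series_poisson_factorial2 lam :
  is_series (fun k => poisson_pmf lam k * (INR k * (INR k - 1))) (lam ^ 2).
Proof.
  apply is_series_shift.
  replace (lam ^ 2 - poisson_pmf lam 0 * (INR 0 * (INR 0 - 1))) with (lam * lam) by (simpl; ring).
  apply (is_series_R_ext _ _ _ (is_series_R_scal lam _ _ (is_series_poisson_mean lam))).
  intro k. rewrite <- Rmult_assoc, <- poisson_pmf_succ, S_INR. ring.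
Qed.

Lemma is_series_poisson_variance lam :
  is_series (fun k => poisson_pmf lam k * (INR k - lam) ^ 2) lam.
Proof.
  pose proof (is_series_R_lin _ _ _ _ 1 1 (is_series_poisson_factorial2 lam)
    (is_series_R_lin _ _ _ _ (1 - 2 * lam) (lam ^ 2)
       (is_series_poisson_mean lam) (is_series_poisson_pmf lam))) as H.
  replace (1 * lam ^ 2 + 1 * ((1 - 2 * lam) * lam + lam ^ 2 * 1)) with lam in H by ring.
  apply (is_series_R_ext _ _ _ H). intro k. ring.
Qed.

Lemma ex_series_R_le (a b : nat -> R) :
  (forall k, Rabs (a k) <= b k) -> ex_series b -> ex_series a.
Proof. exact (ex_series_le (V := R_CompleteNormedModule) a b). Qed.

Lemma ex_series_R_scal (c : R) (a : nat -> R) :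
  ex_series a -> ex_series (fun k => c * a k).
Proof. intros [l H]. exists (c * l). now apply is_series_R_scal. Qed.

Lemma ex_series_R_plus (a b : nat -> R) :
  ex_series a -> ex_series b -> ex_series (fun k => a k + b k).
Proof. exact (ex_series_plus (V := R_NormedModule) a b). Qed.

Lemma poisson_var_eq lam (g : nat -> R) :
  ex_series (fun k => poisson_pmf lam k * g k) ->
  ex_series (fun k => poisson_pmf lam k * g k ^ 2) ->
  poisson_var lam g
  = Series (fun k => poisson_pmf lam k * g k ^ 2) - poisson_mean lam g ^ 2.
Proof.
  intros Hg Hg2. unfold poisson_var. set (m := poisson_mean lam g).
  assert (Hp : ex_series (poisson_pmf lam)) by (eexists; apply is_series_poisson_pmf).
  rewrite (Series_ext _ (fun k => (poisson_pmf lam k * g k ^ 2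
                                   + (-2 * m) * (poisson_pmf lam k * g k))
                                  + m ^ 2 * poisson_pmf lam k))
    by (intro; ring).
  rewrite !Series_plus, !Series_scal_l
    by auto using ex_series_R_plus, ex_series_R_scal.
  rewrite (is_series_unique _ _ (is_series_poisson_pmf lam)).
  unfold m, poisson_mean. ring.
Qed.

Lemma poisson_var_le lam (g T : nat -> R) :
  0 <= lam -> (forall k, g k ^ 2 <= T k) ->
  ex_series (fun k => poisson_pmf lam k * T k) ->
  poisson_var lam g <= Series (fun k => poisson_pmf lam k * T k).
Proof.
  intros Hlam HT HS.
  assert (Hpmf : forall k, 0 <= poisson_pmf lam k) by (intro; now apply poisson_pmf_ge0).
  assert (Hg2 : ex_series (fun k => poisson_pmf lam k * g k ^ 2)).
  { refine (ex_series_R_le _ _ _ HS). intro k.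
    rewrite Rabs_pos_eq by (apply Rmult_le_pos; auto using pow2_ge_0).
    apply Rmult_le_compat_l; auto. }
  assert (Hg : ex_series (fun k => poisson_pmf lam k * g k)).
  { apply (ex_series_R_le _ (fun k => poisson_pmf lam k + poisson_pmf lam k * g k ^ 2));
      [| apply ex_series_R_plus; auto; eexists; apply is_series_poisson_pmf].
    intro k. rewrite Rabs_mult, (Rabs_pos_eq (poisson_pmf _ _)) by auto.
    assert (Rabs (g k) <= 1 + g k ^ 2) by (rewrite <- (pow2_abs (g k)); nra).
    specialize (Hpmf k). nra. }
  rewrite (poisson_var_eq lam g Hg Hg2).
  assert (Series (fun k => poisson_pmf lam k * g k ^ 2)
          <= Series (fun k => poisson_pmf lam k * T k)).
  { apply Series_le; auto. intro k.
    split; [apply Rmult_le_pos | apply Rmult_le_compat_l]; auto using pow2_ge_0. }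
  pose proof (pow2_ge_0 (poisson_mean lam g)). lra.
Qed.

Lemma exp_mult_INR (u : R) (k : nat) : exp (INR k * u) = exp u ^ k.
Proof.
  induction k as [|k IH]; simpl; [rewrite Rmult_0_l; apply exp_0 |].
  rewrite <- IH, <- exp_plus. destruct k; simpl; f_equal; ring.
Qed.

Definition tail_rate : R := 1 / 2 - exp (-1).

Lemma tail_rate_pos : 0 < tail_rate.
Proof.
  unfold tail_rate. pose proof (exp_ineq1 1 ltac:(lra)).
  assert (exp (-1) * exp 1 = 1)
    by (rewrite <- exp_plus; replace (-1 + 1) with 0 by ring; apply exp_0).
  pose proof (exp_pos (-1)). nra.
Qed.

Lemma is_series_poisson_envelope (n p A B Dc : R) : 0 < n ->
  is_series
    (fun k => poisson_pmf (n * p) k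
              * (A * (INR k / n - p) ^ 2 + B + Dc * exp (n * p / 2 - INR k)))
    (A * (p / n) + B + Dc * exp (- (tail_rate * (n * p)))).
Proof.
  intro Hn. unfold tail_rate. set (lam := n * p).
  pose proof (is_series_R_lin _ _ _ _ 1 (Dc * exp (lam / 2))
    (is_series_R_lin _ _ _ _ (A / n ^ 2) B
       (is_series_poisson_variance lam) (is_series_poisson_pmf lam))
    (is_series_poisson_pgf lam (exp (-1)))) as H.
  replace (1 * (A / n ^ 2 * lam + B * 1) + Dc * exp (lam / 2) * exp (lam * (exp (-1) - 1)))
    with (A * (p / n) + B + Dc * exp (- ((1 / 2 - exp (-1)) * lam))) in H.
  2:{ rewrite Rmult_assoc, <- exp_plus.
      replace (lam / 2 + lam * (exp (-1) - 1)) with (- ((1 / 2 - exp (-1)) * lam)) by field.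
      unfold lam. field. lra. }
  apply (is_series_R_ext _ _ _ H). intro k.
  rewrite <- exp_mult_INR. unfold Rminus at 3. rewrite exp_plus.
  replace (INR k * -1) with (- INR k) by ring. unfold lam. field. lra.
Qed.

(** * Real powers and calculus on (0, 1] *)

Lemma Rpower_pos x y : 0 < Rpower x y.
Proof. apply exp_pos. Qed.

Lemma Rpower_1_l y : Rpower 1 y = 1.
Proof. unfold Rpower. rewrite ln_1, Rmult_0_r. apply exp_0. Qed.

Lemma Rpower_le_antitone a b y : 0 < a <= b -> y <= 0 -> Rpower b y <= Rpower a y.
Proof.
  intros Hab Hy. replace y with (- - y) by ring. rewrite (Rpower_Ropp b), (Rpower_Ropp a).
  apply Rinv_le_contravar; [apply Rpower_pos | apply Rle_Rpower_l; lra].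
Qed.

Lemma Rpower_ge_1 x y : 0 < x <= 1 -> y <= 0 -> 1 <= Rpower x y.
Proof. intros. rewrite <- (Rpower_1_l y). apply Rpower_le_antitone; lra. Qed.

Lemma Rpower_minus_1 x y : 0 < x -> Rpower x (y - 1) = Rpower x y / x.
Proof. intro. unfold Rminus. now rewrite Rpower_plus, Rpower_Ropp, Rpower_1. Qed.

Lemma Rpower_minus_INR_mult_pow x y (m : nat) : 0 < x ->
  Rpower x (y - INR m) * x ^ m = Rpower x y.
Proof. intro. rewrite <- Rpower_pow, <- Rpower_plus by auto. f_equal. ring. Qed.

Lemma Rpower_sqr x y : 0 < x -> Rpower x y ^ 2 = Rpower x (2 * y).
Proof. intro. simpl. rewrite Rmult_1_r, <- Rpower_plus. f_equal. ring. Qed.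

Lemma Rpower_half_le x y : 0 < x -> -1 <= y <= 0 -> Rpower (x / 2) y <= 2 * Rpower x y.
Proof.
  intros Hx Hy. unfold Rdiv. rewrite <- Rpower_mult_distr, Rmult_comm by lra.
  apply Rmult_le_compat_r; [left; apply Rpower_pos |].
  assert (E : Rpower (/ 2) y = Rpower 2 (- y)).
  { pose proof (Rpower_pos 2 y).
    rewrite Rpower_Ropp. apply (Rmult_eq_reg_l (Rpower 2 y)); [| lra].
    rewrite Rpower_mult_distr, Rinv_r, Rpower_1_l by lra. field. lra. }
  rewrite E. rewrite <- (Rpower_1 2) at 2 by lra. apply Rle_Rpower; lra.
Qed.

Lemma is_derive_R_eq (f : R -> R) x l l' : is_derive f x l -> l = l' -> is_derive f x l'.
Proof. now intros H <-. Qed.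

Lemma is_derive_R_ext (f g : R -> R) x l :
  (forall t, f t = g t) -> is_derive f x l -> is_derive g x l.
Proof. exact (is_derive_ext f g x l). Qed.

Lemma is_derive_scal_Rpower (M b t : R) : 0 < t ->
  is_derive (fun t => M * Rpower t b) t (M * b * Rpower t (b - 1)).
Proof.
  intro Ht. apply is_derive_Reals. rewrite Rmult_assoc.
  apply (derivable_pt_lim_scal (fun t => Rpower t b)).
  now apply derivable_pt_lim_power.
Qed.

Lemma deriv_within01_is_derive g l x :
  0 < x < 1 -> deriv_within01 g l x -> is_derive g x l.
Proof.
  intros Hx Hd. apply is_derive_Reals. intros eps Heps.
  destruct (proj1 (filterlim_locally (F := within _ (locally x)) _ l) Hd
              (mkposreal eps Heps)) as [d Hdd].
  assert (Hdp : 0 < Rmin d (Rmin x (1 - x)))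
    by (apply Rmin_pos; [apply cond_pos | apply Rmin_pos; lra]).
  exists (mkposreal _ Hdp). intros h Hh0 Hh. simpl in Hh.
  pose proof (Rmin_l d (Rmin x (1 - x))). pose proof (Rmin_r d (Rmin x (1 - x))).
  pose proof (Rmin_l x (1 - x)). pose proof (Rmin_r x (1 - x)).
  apply Rabs_def2 in Hh as Hh'.
  specialize (Hdd (x + h)). replace (x + h - x) with h in Hdd by ring.
  apply Hdd; [change (Rabs (x + h - x) < d); replace (x + h - x) with h by ring; lra
  | unfold I01; repeat split; lra].
Qed.

Lemma deriv_within01_continuous g l x : deriv_within01 g l x ->
  forall eps, 0 < eps -> exists d, 0 < d /\
    forall y, I01 y -> Rabs (y - x) < d -> Rabs (g y - g x) < eps.
Proof.
  intros Hd eps Heps.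
  destruct (proj1 (filterlim_locally (F := within _ (locally x)) _ l) Hd
              (mkposreal 1 Rlt_0_1)) as [d Hdd].
  pose proof (Rabs_pos l).
  pose proof (Rmin_l d (eps / (Rabs l + 1))). pose proof (Rmin_r d (eps / (Rabs l + 1))).
  exists (Rmin d (eps / (Rabs l + 1))).
  split; [apply Rmin_pos; [apply cond_pos | apply Rdiv_lt_0_compat; lra] |].
  intros y Hy Hyx.
  destruct (Req_dec y x) as [->|Hne]; [rewrite Rminus_diag, Rabs_R0; auto |].
  assert (Hq : Rabs ((g y - g x) / (y - x) - l) < 1)
    by (apply (Hdd y); [change (Rabs (y - x) < d) | split]; auto; lra).
  assert (Hq' : Rabs ((g y - g x) / (y - x)) <= Rabs l + 1)
    by (pose proof (Rabs_triang_inv ((g y - g x) / (y - x)) l); lra).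
  replace (g y - g x) with ((g y - g x) / (y - x) * (y - x)) by (field; lra).
  rewrite Rabs_mult.
  apply Rle_lt_trans with ((Rabs l + 1) * Rabs (y - x)).
  - apply Rmult_le_compat_r; [apply Rabs_pos | auto].
  - apply Rlt_le_trans with ((Rabs l + 1) * (eps / (Rabs l + 1))); [| right; field; lra].
    apply Rmult_lt_compat_l; lra.
Qed.

Lemma derive_nonpos_le (u u' : R -> R) y w : y <= w ->
  (forall t, y <= t <= w -> is_derive u t (u' t)) ->
  (forall t, y <= t <= w -> u' t <= 0) -> u w <= u y.
Proof.
  intros Hyw Hd Hs.
  destruct (MVT_gen u y w u') as [c [Hc E]];
    rewrite ?Rmin_left, ?Rmax_right in * by lra.
  - intros t Ht. apply Hd. lra.
  - intros t Ht. apply derivable_continuous_pt. exists (u' t).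
    apply is_derive_Reals, Hd. lra.
  - pose proof (Hs c Hc). nra.
Qed.

Lemma mvt_abs_le (f f' h h' : R -> R) y w : y <= w ->
  (forall t, y <= t <= w -> is_derive f t (f' t)) ->
  (forall t, y <= t <= w -> is_derive h t (h' t)) ->
  (forall t, y <= t <= w -> Rabs (f' t) <= h' t) ->
  Rabs (f w - f y) <= h w - h y.
Proof.
  intros Hyw Hf Hh Hb.
  assert (Hup : f w - h w <= f y - h y).
  { apply (derive_nonpos_le (fun t => f t - h t) (fun t => f' t - h' t)); auto.
    - intros t Ht. apply (is_derive_minus (V := R_NormedModule)); auto.
    - intros t Ht. pose proof (Rle_abs (f' t)). pose proof (Hb t Ht). lra. }
  assert (Hlo : - f w - h w <= - f y - h y).
  { apply (derive_nonpos_le (fun t => - f t - h t) (fun t => - f' t - h' t)); auto.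
    - intros t Ht. apply (is_derive_minus (V := R_NormedModule)); auto.
      apply (is_derive_opp (V := R_NormedModule)); auto.
    - intros t Ht. pose proof (Rle_abs (- f' t)). rewrite Rabs_Ropp in *.
      pose proof (Hb t Ht). lra. }
  apply Rabs_le. lra.
Qed.

Lemma within01_abs_sub_le (f f' h h' : R -> R) y z : 0 < y <= z -> z <= 1 ->
  (forall t, I01 t -> deriv_within01 f (f' t) t) ->
  (forall t, 0 < t -> is_derive h t (h' t)) ->
  (forall t, y <= t < z -> Rabs (f' t) <= h' t) ->
  Rabs (f z - f y) <= h z - h y.
Proof.
  intros Hyz Hz Hf Hh Hb. apply le_epsilon. intros eps Heps.
  assert (Hz01 : I01 z) by (unfold I01; lra).
  destruct (deriv_within01_continuous f (f' z) z (Hf z Hz01) (eps / 2) ltac:(lra))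
    as [d1 [Hd1 Cf]].
  assert (Ch : continuity_pt h z).
  { apply derivable_continuous_pt. exists (h' z). apply is_derive_Reals, Hh. lra. }
  destruct (Ch (eps / 2) ltac:(lra)) as [d2 [Hd2 Ch']].
  pose proof (Rmin_l d1 d2). pose proof (Rmin_r d1 d2). set (d := Rmin d1 d2) in *.
  assert (Hd : 0 < d) by (apply Rmin_pos; lra).
  destruct (Req_dec y z) as [<-|Hne]; [rewrite !Rminus_diag, Rabs_R0; lra |].
  (* At z = 1 the derivative is one-sided: apply the mean value theorem on [y, w] for some
     w < z, then let w tend to z. *)
  pose proof (Rmax_l y (z - d / 2)). pose proof (Rmax_r y (z - d / 2)).
  set (w := Rmax y (z - d / 2)) in *.
  assert (Hw : w < z) by (apply Rmax_lub_lt; lra).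
  assert (Hwz : Rabs (w - z) < d) by (rewrite Rabs_left; lra).
  assert (Mw : Rabs (f w - f y) <= h w - h y).
  { apply (mvt_abs_le f f' h h'); try lra; intros t Ht.
    - apply deriv_within01_is_derive; [| apply Hf; unfold I01]; lra.
    - apply Hh. lra.
    - apply Hb. lra. }
  assert (Ew : Rabs (f z - f w) < eps / 2)
    by (rewrite Rabs_minus_sym; apply Cf; unfold I01; lra).
  assert (Hw' : Rabs (h w - h z) < eps / 2).
  { apply Ch'. split; [split; [exact I | lra] | change (Rabs (w - z) < d2); lra]. }
  apply Rabs_def2 in Hw'.
  pose proof (Rabs_triang (f z - f w) (f w - f y)).
  replace (f z - f w + (f w - f y)) with (f z - f y) in * by ring.
  lra.
Qed.

Lemma within01_abs_le_rpower_neg (f f' : R -> R) M b : b < 0 -> 0 <= M ->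
  (forall t, I01 t -> deriv_within01 f (f' t) t) ->
  (forall t, I01 t -> Rabs (f' t) <= M * Rpower t (b - 1)) ->
  forall y, I01 y -> Rabs (f y) <= (Rabs (f 1) + M / - b) * Rpower y b.
Proof.
  intros Hb HM Hf Hf' y Hy.
  assert (Hsub : Rabs (f 1 - f y) <= M / b * Rpower 1 b - M / b * Rpower y b).
  { apply (within01_abs_sub_le f f' (fun t => M / b * Rpower t b)
                                    (fun t => M / b * b * Rpower t (b - 1)));
      auto; unfold I01 in *; try lra.
    - intros t Ht. now apply is_derive_scal_Rpower.
    - intros t Ht. replace (M / b * b) with M by (field; lra). apply Hf'. lra. }
  rewrite Rpower_1_l in Hsub.
  pose proof (Rpower_ge_1 y b Hy ltac:(lra)).
  assert (0 <= M / - b) by (apply Rdiv_le_0_compat; lra).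
  pose proof (Rabs_triang_inv (f y) (f 1)). rewrite Rabs_minus_sym in Hsub.
  replace (M / b * 1 - M / b * Rpower y b) with (M / - b * (Rpower y b - 1)) in Hsub
    by (field; lra).
  pose proof (Rabs_pos (f 1)). nra.
Qed.

Lemma within01_abs_sub_le_rpower_pos (f f' : R -> R) M a : 0 < a -> 0 <= M ->
  (forall t, I01 t -> deriv_within01 f (f' t) t) ->
  (forall t, I01 t -> Rabs (f' t) <= M * Rpower t (a - 1)) ->
  forall y z, 0 < y <= z -> z <= 1 -> Rabs (f z - f y) <= M / a * Rpower z a.
Proof.
  intros Ha HM Hf Hf' y z Hyz Hz.
  assert (Hsub : Rabs (f z - f y) <= M / a * Rpower z a - M / a * Rpower y a).
  { apply (within01_abs_sub_le f f' (fun t => M / a * Rpower t a)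
                                    (fun t => M / a * a * Rpower t (a - 1))); auto.
    - intros t Ht. now apply is_derive_scal_Rpower.
    - intros t Ht. replace (M / a * a) with M by (field; lra). apply Hf'. unfold I01. lra. }
  assert (0 <= M / a) by (apply Rdiv_le_0_compat; lra).
  pose proof (Rpower_pos y a). nra.
Qed.

Definition lipschitz_on (f : R -> R) (L a b : R) : Prop :=
  forall x y, a <= x <= b -> a <= y <= b -> Rabs (f x - f y) <= L * Rabs (x - y).

Lemma lipschitz_on_of_ordered (f : R -> R) L a b :
  (forall x y, a <= x <= y -> y <= b -> Rabs (f y - f x) <= L * (y - x)) ->
  lipschitz_on f L a b.
Proof.
  intros H x y Hx Hy. destruct (Rle_dec x y).
  - rewrite Rabs_minus_sym, (Rabs_minus_sym x), (Rabs_pos_eq (y - x)) by lra. apply H; lra.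
  - rewrite (Rabs_pos_eq (x - y)) by lra. apply H; lra.
Qed.

Lemma lipschitz_on_within01 (f f' : R -> R) L a b : 0 < a -> b <= 1 ->
  (forall t, I01 t -> deriv_within01 f (f' t) t) ->
  (forall t, a <= t < b -> Rabs (f' t) <= L) -> lipschitz_on f L a b.
Proof.
  intros Ha Hb Hf Hf'. apply lipschitz_on_of_ordered. intros x y Hx Hy.
  replace (L * (y - x)) with (L * y - L * x) by ring.
  apply (within01_abs_sub_le f f' (fun t => L * t) (fun _ => L)); try lra; auto.
  - intros t _. auto_derive; auto. ring.
  - intros t Ht. apply Hf'. lra.
Qed.

Lemma lipschitz_on_of_derive (f f' : R -> R) L a b :
  (forall t, a <= t <= b -> is_derive f t (f' t)) ->
  (forall t, a <= t <= b -> Rabs (f' t) <= L) -> lipschitz_on f L a b.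
Proof.
  intros Hf Hf'. apply lipschitz_on_of_ordered. intros x y Hx Hy.
  replace (L * (y - x)) with (L * y - L * x) by ring.
  apply (mvt_abs_le f f' (fun t => L * t) (fun _ => L)); try lra; intros t Ht.
  - apply Hf. lra.
  - auto_derive; auto. ring.
  - apply Hf'. lra.
Qed.

Lemma lipschitz_on_le (f : R -> R) L L' a b :
  L <= L' -> lipschitz_on f L a b -> lipschitz_on f L' a b.
Proof.
  intros HL H x y Hx Hy. eapply Rle_trans; [apply H; auto |].
  apply Rmult_le_compat_r; [apply Rabs_pos | auto].
Qed.

Lemma lipschitz_on_sub (f : R -> R) L a b a' b' : a <= a' -> b' <= b ->
  lipschitz_on f L a b -> lipschitz_on f L a' b'.
Proof. intros Ha Hb H x y Hx Hy. apply H; lra. Qed.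

Lemma lipschitz_on_ext (f g : R -> R) L a b : (forall t, a <= t <= b -> f t = g t) ->
  lipschitz_on g L a b -> lipschitz_on f L a b.
Proof. intros E H x y Hx Hy. rewrite !E by auto. now apply H. Qed.

Lemma lipschitz_on_concat (f : R -> R) L a b c : a <= b <= c ->
  lipschitz_on f L a b -> lipschitz_on f L b c -> lipschitz_on f L a c.
Proof.
  intros Hb H1 H2. apply lipschitz_on_of_ordered. intros x y Hx Hy.
  destruct (Rle_dec y b); [| destruct (Rle_dec b x)].
  - specialize (H1 y x). rewrite (Rabs_pos_eq (y - x)) in H1 by lra. apply H1; lra.
  - specialize (H2 y x). rewrite (Rabs_pos_eq (y - x)) in H2 by lra. apply H2; lra.
  - specialize (H1 b x). specialize (H2 y b).
    rewrite (Rabs_pos_eq (b - x)) in H1 by lra. rewrite (Rabs_pos_eq (y - b)) in H2 by lra.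
    pose proof (Rabs_triang (f y - f b) (f b - f x)).
    replace (f y - f b + (f b - f x)) with (f y - f x) in * by ring.
    pose proof (H1 ltac:(lra) ltac:(lra)). pose proof (H2 ltac:(lra) ltac:(lra)). lra.
Qed.

(** * Bounds on the derivatives of phi *)

Section DerivativeBounds.

Variables (alpha : R) (phi : R -> R) (dphi : nat -> R -> R).
Hypothesis Halpha : 0 < alpha < 1.
Hypothesis Hdphi0 : forall x, I01 x -> dphi 0%nat x = phi x.
Hypothesis Hderiv : forall m x, (m < 4)%nat -> I01 x -> deriv_within01 (dphi m) (dphi (S m) x) x.

Definition dphi_bound (m : nat) (K : R) : Prop :=
  forall x, I01 x -> Rabs (dphi m x) <= K * Rpower x (alpha - INR m).

Lemma dphi_bound_pred m K : (1 <= m < 4)%nat -> 0 <= K -> dphi_bound (S m) K ->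
  dphi_bound m (Rabs (dphi m 1) + K / (INR m - alpha)).
Proof.
  intros Hm HK HS x Hx.
  assert (H1 : 1 <= INR m) by (apply (le_INR 1); lia).
  replace (INR m - alpha) with (- (alpha - INR m)) by ring.
  apply (within01_abs_le_rpower_neg _ (dphi (S m))); auto; try lra.
  - intros t Ht. apply Hderiv; auto. lia.
  - intros t Ht. specialize (HS t Ht). rewrite S_INR in HS.
    replace (alpha - INR m - 1) with (alpha - (INR m + 1)) by ring. auto.
Qed.

Lemma dphi_bound_ge0 m K : dphi_bound m K -> 0 <= K.
Proof.
  intro H. specialize (H 1 ltac:(unfold I01; lra)).
  rewrite Rpower_1_l, Rmult_1_r in H. pose proof (Rabs_pos (dphi m 1)). lra.
Qed.

Lemma dphi_bound_le m K K' : K <= K' -> dphi_bound m K -> dphi_bound m K'.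
Proof.
  intros HK H x Hx. eapply Rle_trans; [apply H; auto |].
  apply Rmult_le_compat_r; [left; apply Rpower_pos | auto].
Qed.

Lemma phi_sub_le_of_dphi_bound K : dphi_bound 1 K ->
  forall y z, 0 < y <= z -> z <= 1 -> Rabs (phi z - phi y) <= K / alpha * Rpower z alpha.
Proof.
  intros H1 y z Hyz Hz.
  rewrite <- (Hdphi0 z), <- (Hdphi0 y) by (unfold I01; lra).
  apply (within01_abs_sub_le_rpower_pos _ (dphi 1%nat)); auto; try lra.
  - eapply dphi_bound_ge0; eauto.
  - intros t Ht. apply Hderiv; auto.
Qed.

Lemma dphi_bounds_of_fourth K4 : dphi_bound 4 K4 ->
  exists K, 0 <= K /\
    (forall m, (1 <= m <= 4)%nat -> dphi_bound m K) /\
    (forall y z, 0 < y <= z -> z <= 1 -> Rabs (phi z - phi y) <= K * Rpower z alpha).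
Proof.
  intros B4. pose proof (dphi_bound_ge0 _ _ B4) as HK4.
  assert (B3 := dphi_bound_pred 3 _ ltac:(lia) HK4 B4).
  pose proof (dphi_bound_ge0 _ _ B3) as HK3.
  assert (B2 := dphi_bound_pred 2 _ ltac:(lia) HK3 B3).
  pose proof (dphi_bound_ge0 _ _ B2) as HK2.
  assert (B1 := dphi_bound_pred 1 _ ltac:(lia) HK2 B2).
  pose proof (dphi_bound_ge0 _ _ B1) as HK1.
  set (K1 := Rabs (dphi 1%nat 1) + _) in *. set (K2 := Rabs (dphi 2%nat 1) + _) in *.
  set (K3 := Rabs (dphi 3%nat 1) + _) in *.
  assert (HK1a : 0 <= K1 / alpha) by (apply Rdiv_le_0_compat; lra).
  exists (K1 + K2 + K3 + K4 + K1 / alpha). repeat split; [lra | |].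
  - intros m Hm. destruct m as [|[|[|[|[|m]]]]]; try lia.
    + apply (dphi_bound_le _ K1); [lra | exact B1].
    + apply (dphi_bound_le _ K2); [lra | exact B2].
    + apply (dphi_bound_le _ K3); [lra | exact B3].
    + apply (dphi_bound_le _ K4); [lra | exact B4].
  - intros y z Hyz Hz. eapply Rle_trans; [exact (phi_sub_le_of_dphi_bound K1 B1 y z Hyz Hz) |].
    apply Rmult_le_compat_r; [left; apply Rpower_pos | lra].
Qed.

End DerivativeBounds.

(** * The Hermite form of H_4 *)

(* Polynomials are coefficient lists, constant term first. *)
Fixpoint peval (l : list R) (t : R) : R :=
  match l with nil => 0 | a :: l' => a + t * peval l' t end.

Fixpoint padd (l1 l2 : list R) : list R :=
  match l1, l2 with
  | nil, _ => l2
  | _, nil => l1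
  | a :: l1', b :: l2' => (a + b) :: padd l1' l2'
  end.

Fixpoint pder (l : list R) : list R :=
  match l with nil => nil | _ :: l' => padd l' (0 :: pder l') end.

Fixpoint pnorm (l : list R) : R :=
  match l with nil => 0 | a :: l' => Rabs a + pnorm l' end.

Lemma peval_padd l1 l2 t : peval (padd l1 l2) t = peval l1 t + peval l2 t.
Proof.
  revert l2; induction l1 as [|a l1 IH]; intros [|b l2]; simpl; try ring.
  rewrite IH. ring.
Qed.

Lemma is_derive_peval l t : is_derive (peval l) t (peval (pder l) t).
Proof.
  induction l as [|a l IH].
  - apply (is_derive_const (V := R_NormedModule)).
  - change (is_derive (fun t => a + t * peval l t) t (peval (pder (a :: l)) t)).
    eapply is_derive_R_eq.
    + apply (is_derive_plus (V := R_NormedModule));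
        [apply is_derive_const | apply (is_derive_mult (K := R_AbsRing))];
        [apply is_derive_id | exact IH | exact Rmult_comm].
    + simpl. rewrite peval_padd. simpl. unfold plus, mult, zero, one; simpl. ring.
Qed.

Lemma pnorm_ge0 l : 0 <= pnorm l.
Proof. induction l; simpl; [lra | pose proof (Rabs_pos a); lra]. Qed.

Lemma peval_abs_le l t : Rabs t <= 1 -> Rabs (peval l t) <= pnorm l.
Proof.
  intro Ht. induction l as [|a l IH]; simpl; [rewrite Rabs_R0; lra |].
  eapply Rle_trans; [apply Rabs_triang |]. rewrite Rabs_mult.
  pose proof (Rabs_pos (peval l t)). pose proof (Rabs_pos t). nra.
Qed.

Fixpoint hsum (qs : list (list R)) (m : nat) (d : nat -> R) (s t : R) : R :=
  match qs with
  | nil => 0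
  | q :: qs' => d m * s ^ m * peval q t + hsum qs' (S m) d s t
  end.

Fixpoint hnorm (qs : list (list R)) : R :=
  match qs with nil => 0 | q :: qs' => pnorm q + hnorm qs' end.

Lemma is_derive_hsum qs m d s t :
  is_derive (hsum qs m d s) t (hsum (map pder qs) m d s t).
Proof.
  revert m. induction qs as [|q qs IH]; intro m.
  - apply (is_derive_const (V := R_NormedModule)).
  - change (is_derive (fun t => d m * s ^ m * peval q t + hsum qs (S m) d s t) t
                      (d m * s ^ m * peval (pder q) t + hsum (map pder qs) (S m) d s t)).
    apply (is_derive_plus (V := R_NormedModule)); [| apply IH].
    apply is_derive_scal, is_derive_peval.
Qed.

Lemma hsum_abs_le qs m d s t (D K a : R) :
  Rabs t <= 1 -> 0 < D -> Rabs s <= D -> 0 <= K ->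
  (forall j, (m <= j < m + length qs)%nat -> Rabs (d j) <= K * Rpower D (a - INR j)) ->
  Rabs (hsum qs m d s t) <= K * hnorm qs * Rpower D a.
Proof.
  intros Ht HD Hs HK. revert m. induction qs as [|q qs IH]; intros m Hd; simpl.
  - rewrite Rabs_R0. lra.
  - assert (Hq : Rabs (d m * s ^ m * peval q t) <= K * pnorm q * Rpower D a).
    { rewrite <- (Rpower_minus_INR_mult_pow D a m HD), !Rabs_mult, <- RPow_abs.
      pose proof (peval_abs_le q t Ht). pose proof (pnorm_ge0 q).
      pose proof (Rabs_pos (peval q t)). pose proof (Rpower_pos D (a - INR m)).
      assert (0 <= Rabs s ^ m) by (apply pow_le, Rabs_pos).
      assert (Rabs s ^ m <= D ^ m) by (apply pow_incr; split; [apply Rabs_pos | auto]).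
      assert (Rabs (d m) <= K * Rpower D (a - INR m)) by (apply Hd; simpl; lia).
      assert (Rabs (d m) * Rabs s ^ m <= K * Rpower D (a - INR m) * D ^ m)
        by (apply Rmult_le_compat; auto using Rabs_pos).
      apply Rle_trans with (K * Rpower D (a - INR m) * D ^ m * pnorm q); [| right; ring].
      apply Rmult_le_compat; auto using Rabs_pos; apply Rmult_le_pos; auto using Rabs_pos. }
    assert (Hr := IH (S m) ltac:(intros j Hj; apply Hd; simpl; lia)).
    eapply Rle_trans; [apply Rabs_triang |]. lra.
Qed.

(* Coefficients, by increasing degree, of the polynomials q_m with
   H_4(a + s t; phi, a, a + s) = phi(a) + sum_m phi^(m)(a) s^m q_m(t). *)
Definition hermite4_polys : list (list R) :=
  (0 :: 1 :: 0 :: 0 :: 0 :: -70 :: 224 :: -280 :: 160 :: -35 :: nil)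
  :: (0 :: 0 :: 1/2 :: 0 :: 0 :: -35/2 :: 105/2 :: -63 :: 35 :: -15/2 :: nil)
  :: (0 :: 0 :: 0 :: 1/6 :: 0 :: -5/2 :: 20/3 :: -15/2 :: 4 :: -5/6 :: nil)
  :: (0 :: 0 :: 0 :: 0 :: 1/24 :: -5/24 :: 5/12 :: -5/12 :: 5/24 :: -1/24 :: nil)
  :: nil.

(* The j-th derivative of x |-> H_4(x; phi, a, a + s) - phi(a) when d m = phi^(m)(a). *)
Definition hermite (j : nat) (d : nat -> R) (a s x : R) : R :=
  hsum (Nat.iter j (map pder) hermite4_polys) 1 d s ((x - a) / s) / s ^ j.

Definition hermite_norm (j : nat) : R := hnorm (Nat.iter j (map pder) hermite4_polys).

Lemma INR_fact_succ n : INR (fact (S n)) = INR (S n) * INR (fact n).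
Proof. rewrite fact_simpl, mult_INR. reflexivity. Qed.

Lemma binomial_values :
  Binomial.C 5 0 = 1 /\ Binomial.C 6 1 = 6 /\ Binomial.C 7 2 = 21 /\ Binomial.C 8 3 = 56.
Proof. unfold Binomial.C. simpl minus. rewrite !INR_fact_succ. simpl. repeat split; field. Qed.

Lemma H4_eq_hermite phi dphi a b x : b <> a ->
  H 4 phi dphi a b x = phi a + hermite 0 (fun m => dphi m a) a (b - a) x.
Proof.
  intro Hab. unfold H, hermite, sum_f, bernstein. simpl Nat.iter.
  set (s := b - a). assert (Hs : s <> 0) by (unfold s; lra).
  replace x with (a + s * ((x - a) / s)) by (field; auto).
  set (t := (x - a) / s).
  replace (a + s * t - a) with (s * t) by ring. replace (s * t / s) with t by (field; auto).
  destruct binomial_values as (C0 & C1 & C2 & C3).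
  cbn -[INR fact Binomial.C pow]. rewrite C0, C1, C2, C3. simpl. field.
Qed.

Lemma is_derive_hermite j d a s x : s <> 0 ->
  is_derive (hermite j d a s) x (hermite (S j) d a s x).
Proof.
  intro Hs. unfold hermite. simpl Nat.iter at 2.
  set (qs := Nat.iter j (map pder) hermite4_polys).
  assert (Hsj : s ^ j <> 0) by now apply pow_nonzero.
  apply (is_derive_R_ext (fun x => / s ^ j * hsum qs 1 d s ((x - a) / s)));
    [intro; field; auto |].
  eapply is_derive_R_eq.
  - apply is_derive_scal.
    apply (is_derive_comp (V := R_NormedModule) (hsum qs 1 d s) (fun x => (x - a) / s)).
    + apply is_derive_hsum.
    + auto_derive; auto.
  - simpl. unfold scal; simpl; unfold mult; simpl. field. auto.
Qed.

Lemma length_hermite_derivs j : length (Nat.iter j (map pder) hermite4_polys) = 4%nat.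
Proof. induction j as [|j IH]; [reflexivity |]. simpl. now rewrite length_map. Qed.

Lemma hermite_abs_le j d a s x (D K al : R) : s <> 0 -> Rabs (x - a) <= Rabs s ->
  0 < D -> Rabs s <= D -> 0 <= K ->
  (forall m, (1 <= m <= 4)%nat -> Rabs (d m) <= K * Rpower D (al - INR m)) ->
  Rabs (hermite j d a s x) <= K * hermite_norm j * Rpower D al / Rabs s ^ j.
Proof.
  intros Hs Hx HD HsD HK Hd. unfold hermite, hermite_norm.
  assert (Hpos : 0 < Rabs s ^ j) by (apply pow_lt, Rabs_pos_lt; auto).
  rewrite Rabs_div by (apply pow_nonzero; auto). rewrite <- RPow_abs.
  apply Rmult_le_compat_r; [left; apply Rinv_0_lt_compat; auto |].
  apply hsum_abs_le; auto.
  - rewrite Rabs_div by auto. apply Rmult_le_reg_r with (Rabs s); [apply Rabs_pos_lt; auto |].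
    unfold Rdiv. rewrite Rmult_assoc, Rinv_l, Rmult_1_r by (apply Rabs_no_R0; auto). lra.
  - rewrite length_hermite_derivs. intros m Hm. apply Hd. lia.
Qed.

Lemma hermite_at_base d a s : s <> 0 -> hermite 0 d a s a = 0.
Proof.
  intro Hs. unfold hermite. replace ((a - a) / s) with 0 by (field; auto).
  simpl. field.
Qed.

Lemma hermite_norm_ge0 j : 0 <= hermite_norm j.
Proof.
  unfold hermite_norm. induction (Nat.iter j (map pder) hermite4_polys) as [|q qs IH]; simpl;
    [lra | pose proof (pnorm_ge0 q); lra].
Qed.

(** * The pieces of phibar *)

(* [Derive f x] is the limit of the quotients at x + 1 / (n + 1): it only sees f to the
   right of x, which is what makes the one-sided pieces of phibar2 below computable. *)
Lemma Derive_ext_right (f g : R -> R) x e : 0 < e ->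
  (forall y, x <= y < x + e -> f y = g y) -> Derive f x = Derive g x.
Proof.
  intros He Hfg. unfold Derive, Lim. f_equal. apply Lim_seq_ext_loc.
  destruct (archimed_cor1 e He) as [N [HN HN0]]. exists N. intros n Hn. simpl.
  assert (Hn' : / (INR n + 1) < e).
  { apply Rle_lt_trans with (/ INR N); auto.
    apply Rinv_le_contravar; [apply lt_0_INR; lia |]. apply le_INR in Hn. lra. }
  assert (0 < / (INR n + 1)) by (apply Rinv_0_lt_compat; pose proof (pos_INR n); lra).
  rewrite !Rplus_0_l, (Hfg x), (Hfg (x + / (INR n + 1))); auto; lra.
Qed.

Lemma Derive_n2_ext_right (f g : R -> R) x e : 0 < e ->
  (forall y, x <= y < x + e -> f y = g y) -> Derive_n f 2 x = Derive_n g 2 x.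
Proof.
  intros He Hfg. simpl. apply (Derive_ext_right _ _ x e He).
  intros y Hy. apply (Derive_ext_right _ _ y (x + e - y)); [lra |].
  intros z Hz. apply Hfg. lra.
Qed.

Lemma Derive_n2_const (c x : R) : Derive_n (fun _ => c) 2 x = 0.
Proof.
  simpl. rewrite (Derive_ext _ (fun _ => 0)) by (intro; apply Derive_const).
  apply Derive_const.
Qed.

Lemma is_derive_hermite_shift c d a s x : s <> 0 ->
  is_derive (fun x => c + hermite 0 d a s x) x (hermite 1 d a s x).
Proof.
  intro Hs. eapply is_derive_R_eq.
  - apply (is_derive_plus (V := R_NormedModule));
      [apply (is_derive_const (V := R_NormedModule)) | apply is_derive_hermite; auto].
  - unfold plus, zero; simpl. ring.
Qed.

Lemma Derive_n2_hermite c d a s x : s <> 0 ->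
  Derive_n (fun x => c + hermite 0 d a s x) 2 x = hermite 2 d a s x.
Proof.
  intro Hs. simpl.
  rewrite (Derive_ext _ (hermite 1 d a s))
    by (intro; apply is_derive_unique, is_derive_hermite_shift; auto).
  apply is_derive_unique, is_derive_hermite; auto.
Qed.

Section Pieces.

Variables (phi : R -> R) (dphi : nat -> R -> R) (D : R).
Hypothesis HD : 0 < D <= 1.

Let dl m := dphi m D.
Let dr m := dphi m 1.

Lemma phibar_eq_below x : x <= D / 2 ->
  phibar phi dphi D x = phi D + hermite 0 dl D (D / 2 - D) (D / 2).
Proof.
  intro Hx. unfold phibar. destruct (Rle_dec x (D / 2)); [| lra].
  apply H4_eq_hermite. lra.
Qed.

Lemma phibar_eq_left x : D / 2 <= x <= D ->
  phibar phi dphi D x = phi D + hermite 0 dl D (D / 2 - D) x.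
Proof.
  intro Hx. unfold phibar. destruct (Rle_dec x (D / 2)).
  - replace x with (D / 2) by lra. apply H4_eq_hermite. lra.
  - destruct (Rlt_dec x D); [apply H4_eq_hermite; lra |].
    replace x with D by lra. rewrite hermite_at_base by lra.
    destruct (Rle_dec D 1); [ring | lra].
Qed.

Lemma phibar_eq_phi x : D <= x <= 1 -> phibar phi dphi D x = phi x.
Proof.
  intro Hx. unfold phibar.
  destruct (Rle_dec x (D / 2)); [lra |]. destruct (Rlt_dec x D); [lra |].
  destruct (Rle_dec x 1); [auto | lra].
Qed.

Lemma phibar_eq_right x : 1 <= x <= 2 ->
  phibar phi dphi D x = phi 1 + hermite 0 dr 1 1 x.
Proof.
  intro Hx. unfold phibar.
  destruct (Rle_dec x (D / 2)); [lra |]. destruct (Rlt_dec x D); [lra |].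
  destruct (Rle_dec x 1).
  - replace x with 1 by lra. rewrite hermite_at_base by lra. ring.
  - replace (hermite 0 dr 1 1 x) with (hermite 0 dr 1 (2 - 1) x) by (f_equal; ring).
    destruct (Rlt_dec x 2); [| replace x with 2 by lra]; apply H4_eq_hermite; lra.
Qed.

Lemma phibar_eq_above x : 2 <= x -> phibar phi dphi D x = phibar phi dphi D 2.
Proof.
  intro Hx. unfold phibar.
  destruct (Rle_dec x (D / 2)); [lra |]. destruct (Rlt_dec x D); [lra |].
  destruct (Rle_dec x 1); [lra |]. destruct (Rlt_dec x 2); [lra |].
  destruct (Rle_dec 2 (D / 2)); [lra |]. destruct (Rlt_dec 2 D); [lra |].
  destruct (Rle_dec 2 1); [lra |]. destruct (Rlt_dec 2 2); [lra | reflexivity].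
Qed.

Lemma phibar2_below x : x < D / 2 -> phibar2 phi dphi D x = 0.
Proof.
  intro Hx. unfold phibar2.
  rewrite (Derive_n2_ext_right _ (fun _ => phi D + hermite 0 dl D (D / 2 - D) (D / 2))
                                x (D / 2 - x)); [apply Derive_n2_const | lra |].
  intros y Hy. apply phibar_eq_below. lra.
Qed.

Lemma phibar2_left x : D / 2 <= x < D ->
  phibar2 phi dphi D x = hermite 2 dl D (D / 2 - D) x.
Proof.
  intro Hx. unfold phibar2.
  rewrite (Derive_n2_ext_right _ (fun x => phi D + hermite 0 dl D (D / 2 - D) x) x (D - x));
    [apply Derive_n2_hermite; lra | lra |].
  intros y Hy. apply phibar_eq_left. lra.
Qed.

Lemma phibar2_right x : 1 <= x < 2 -> phibar2 phi dphi D x = hermite 2 dr 1 1 x.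
Proof.
  intro Hx. unfold phibar2.
  rewrite (Derive_n2_ext_right _ (fun x => phi 1 + hermite 0 dr 1 1 x) x (2 - x));
    [apply Derive_n2_hermite; lra | lra |].
  intros y Hy. apply phibar_eq_right. lra.
Qed.

Lemma phibar2_above x : 2 <= x -> phibar2 phi dphi D x = 0.
Proof.
  intro Hx. unfold phibar2.
  rewrite (Derive_n2_ext_right _ (fun _ => phibar phi dphi D 2) x 1);
    [apply Derive_n2_const | lra |].
  intros y Hy. apply phibar_eq_above. lra.
Qed.

Hypothesis Hdphi0 : forall x, I01 x -> dphi 0%nat x = phi x.
Hypothesis Hderiv : forall m x, (m < 4)%nat -> I01 x -> deriv_within01 (dphi m) (dphi (S m) x) x.

Lemma phibar2_phi x : D <= x < 1 -> phibar2 phi dphi D x = dphi 2%nat x.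
Proof.
  intro Hx. unfold phibar2.
  assert (Hder : forall m y, (m < 2)%nat -> x <= y < 1 -> is_derive (dphi m) y (dphi (S m) y)).
  { intros m y Hm Hy.
    apply deriv_within01_is_derive; [lra | apply Hderiv; [lia | unfold I01; lra]]. }
  rewrite (Derive_n2_ext_right _ (dphi 0%nat) x (1 - x)); [| lra |].
  - simpl. rewrite (Derive_ext_right _ (dphi 1%nat) x (1 - x)); [| lra |].
    + apply is_derive_unique, Hder; [lia | lra].
    + intros y Hy. apply is_derive_unique, Hder; [lia | lra].
  - intros y Hy. rewrite phibar_eq_phi by lra. symmetry. apply Hdphi0. unfold I01. lra.
Qed.

End Pieces.

Lemma sqr_sum3_le a b c : (a + b + c) ^ 2 <= 3 * (a ^ 2 + b ^ 2 + c ^ 2).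
Proof.
  pose proof (pow2_ge_0 (a - b)). pose proof (pow2_ge_0 (b - c)). pose proof (pow2_ge_0 (a - c)).
  nra.
Qed.

Lemma sqr_le_of_abs_le u b : Rabs u <= b -> u ^ 2 <= b ^ 2.
Proof. intro H. rewrite <- (pow2_abs u). pose proof (Rabs_pos u). apply pow_incr. lra. Qed.

Lemma sqr_sub_add_halves_le U V W N a b c : 0 < N -> U ^ 2 <= a -> V ^ 2 <= b -> W ^ 2 <= c ->
  (U - V / (2 * N) + W / (2 * N)) ^ 2 <= 3 * a + 3 * (b + c) / (4 * N ^ 2).
Proof.
  intros HN HU HV HW.
  replace (U - V / (2 * N) + W / (2 * N)) with (U + - (V / (2 * N)) + W / (2 * N)) by ring.
  eapply Rle_trans; [apply sqr_sum3_le |].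
  replace ((- (V / (2 * N))) ^ 2) with (V ^ 2 / (4 * N ^ 2)) by (field; lra).
  replace ((W / (2 * N)) ^ 2) with (W ^ 2 / (4 * N ^ 2)) by (field; lra).
  assert (V ^ 2 / (4 * N ^ 2) + W ^ 2 / (4 * N ^ 2) <= (b + c) / (4 * N ^ 2))
    by (unfold Rdiv; rewrite <- Rmult_plus_distr_r;
        apply Rmult_le_compat_r; [left; apply Rinv_0_lt_compat; nra | lra]).
  replace (3 * (b + c) / (4 * N ^ 2)) with (3 * ((b + c) / (4 * N ^ 2))) by (field; nra).
  lra.
Qed.

Definition lip_const (K : R) : R := 2 * (2 * hermite_norm 1 + 1) * K.
Definition near_const (K : R) : R := (hermite_norm 0 + 1) * K.
Definition curv_const (K : R) : R := 2 * (4 * hermite_norm 2 + 1) * K.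

Lemma pow_mul_exp_neg_le (c y : R) (m : nat) : 0 < c -> 0 <= y -> (0 < m)%nat ->
  y ^ m * exp (- (c * y)) <= (INR m / c) ^ m.
Proof.
  intros Hc Hy Hm. assert (HM : 0 < INR m) by (apply lt_0_INR; lia).
  set (u := c * y / INR m).
  assert (Hu : 0 <= u) by (unfold u; apply Rdiv_le_0_compat; nra).
  assert (Hum : u ^ m <= exp (c * y)).
  { replace (c * y) with (INR m * u) by (unfold u; field; lra). rewrite exp_mult_INR.
    apply pow_incr. pose proof (exp_ineq1_le u). lra. }
  replace (y ^ m) with ((INR m / c) ^ m * u ^ m)
    by (rewrite <- Rpow_mult_distr; f_equal; unfold u; field; lra).
  assert (0 < (INR m / c) ^ m) by (apply pow_lt, Rdiv_lt_0_compat; lra).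
  pose proof (exp_pos (- (c * y))).
  apply Rle_trans with ((INR m / c) ^ m * exp (c * y) * exp (- (c * y))).
  - apply Rmult_le_compat_r; [lra |]. apply Rmult_le_compat_l; lra.
  - rewrite Rmult_assoc, <- exp_plus, Rplus_opp_r, exp_0. lra.
Qed.

(* Trade powers of p for powers of N p, which the exponential absorbs. *)
Lemma tail_term_le (a b alpha D p N : R) : alpha <= 2 -> 0 < D <= p -> 0 < N ->
  (3 * (a * Rpower p alpha) ^ 2 + 3 * (b * Rpower D (alpha - 1)) ^ 2 / (4 * N ^ 2))
    * exp (- (tail_rate * (N * p)))
  <= (3 * a ^ 2 * (INR 4 / tail_rate) ^ 4 + 3 * b ^ 2 / 4 * (INR 2 / tail_rate) ^ 2)
     * (Rpower D (2 * alpha - 4) / N ^ 4).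
Proof.
  intros Halpha HDp HN.
  set (Z := Rpower D (2 * alpha - 4)). set (E := exp (- (tail_rate * (N * p)))).
  assert (HZ : 0 < Z) by apply Rpower_pos. assert (HE : 0 < E) by apply exp_pos.
  assert (Hp4 : Rpower p alpha ^ 2 <= Z * p ^ 4).
  { rewrite Rpower_sqr by lra. replace (2 * alpha) with (2 * alpha - 4 + INR 4) by (simpl; ring).
    rewrite Rpower_plus, Rpower_pow by lra.
    apply Rmult_le_compat_r; [apply pow_le; lra | apply Rpower_le_antitone; lra]. }
  assert (HD2 : Rpower D (alpha - 1) ^ 2 = Z * D ^ 2).
  { rewrite Rpower_sqr by lra.
    replace (2 * (alpha - 1)) with (2 * alpha - 4 + INR 2) by (simpl; ring).
    now rewrite Rpower_plus, Rpower_pow by lra. }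
  assert (B4 := pow_mul_exp_neg_le tail_rate (N * p) 4 tail_rate_pos ltac:(nra) ltac:(lia)).
  assert (B2 := pow_mul_exp_neg_le tail_rate (N * p) 2 tail_rate_pos ltac:(nra) ltac:(lia)).
  fold E in B4, B2.
  rewrite !Rpow_mult_distr, HD2.
  pose proof (pow2_ge_0 a). pose proof (pow2_ge_0 b).
  assert (HDp2 : D ^ 2 <= p ^ 2) by (apply pow_incr; lra).
  apply Rle_trans with ((3 * a ^ 2 * (Z * p ^ 4) + 3 * b ^ 2 * (Z * p ^ 2) / (4 * N ^ 2)) * E).
  - apply Rmult_le_compat_r; [lra |]. apply Rplus_le_compat; [nra |].
    apply Rmult_le_compat_r; [left; apply Rinv_0_lt_compat; nra |].
    assert (Z * D ^ 2 <= Z * p ^ 2) by (apply Rmult_le_compat_l; lra). nra.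
  - replace ((3 * a ^ 2 * (Z * p ^ 4) + 3 * b ^ 2 * (Z * p ^ 2) / (4 * N ^ 2)) * E)
      with ((3 * a ^ 2 * ((N * p) ^ 4 * E) + 3 * b ^ 2 / 4 * ((N * p) ^ 2 * E)) * (Z / N ^ 4))
      by (field; lra).
    apply Rmult_le_compat_r; [apply Rdiv_le_0_compat; [lra | apply pow_lt; lra] |].
    apply Rplus_le_compat; apply Rmult_le_compat_l; nra.
Qed.

Definition bulk_const (K c0 : R) : R :=
  3 * lip_const K ^ 2 + 3 * (curv_const K ^ 2 + K ^ 2) / (4 * c0).

Definition tail_const (K : R) : R :=
  3 * near_const K ^ 2 * (INR 4 / tail_rate) ^ 4
  + 3 * curv_const K ^ 2 / 4 * (INR 2 / tail_rate) ^ 2.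

Definition rate_const (K c0 : R) : R := bulk_const K c0 + tail_const K + 1.

Lemma bulk_const_ge0 K c0 : 0 < c0 -> 0 <= bulk_const K c0.
Proof.
  intro Hc0. unfold bulk_const.
  pose proof (pow2_ge_0 (lip_const K)). pose proof (pow2_ge_0 (curv_const K)).
  pose proof (pow2_ge_0 K).
  assert (0 <= 3 * (curv_const K ^ 2 + K ^ 2) / (4 * c0)) by (apply Rdiv_le_0_compat; lra).
  lra.
Qed.

Lemma tail_const_ge0 K : 0 <= tail_const K.
Proof.
  unfold tail_const. pose proof tail_rate_pos.
  pose proof (pow2_ge_0 (near_const K)). pose proof (pow2_ge_0 (curv_const K)).
  assert (0 <= (INR 4 / tail_rate) ^ 4) by (apply pow_le, Rdiv_le_0_compat; [apply pos_INR | lra]).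
  assert (0 <= (INR 2 / tail_rate) ^ 2) by (apply pow_le, Rdiv_le_0_compat; [apply pos_INR | lra]).
  nra.
Qed.

Lemma rate_const_pos K c0 : 0 < c0 -> 0 < rate_const K c0.
Proof.
  intro Hc0. unfold rate_const.
  pose proof (bulk_const_ge0 K c0 Hc0). pose proof (tail_const_ge0 K). lra.
Qed.

Lemma div_sqr_le_of_le_mul a c0 N p : 0 <= a -> 0 < N -> 0 < p -> 0 < c0 <= N * p ->
  a / N ^ 2 <= a / c0 * (p / N).
Proof.
  intros Ha HN Hp Hc0.
  replace (a / N ^ 2) with (a * / (N * N)) by (field; lra).
  replace (a / c0 * (p / N)) with (a * / (N * c0 / p)) by (field; lra).
  apply Rmult_le_compat_l; auto. apply Rinv_le_contravar; [apply Rdiv_lt_0_compat; nra |].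
  apply Rmult_le_reg_r with p; [lra |]. unfold Rdiv. rewrite Rmult_assoc, Rinv_l; nra.
Qed.

Lemma bulk_term_le (alpha K c0 p N : R) : 0 < p -> 0 < N -> 0 < c0 <= N * p ->
  3 * (lip_const K * Rpower p (alpha - 1)) ^ 2 * (p / N)
  + 3 * (curv_const K ^ 2 + K ^ 2) * Rpower p (alpha - 1) ^ 2 / (4 * N ^ 2)
  <= bulk_const K c0 * (Rpower p (2 * alpha - 1) / N).
Proof.
  intros Hp HN Hc0. set (r := Rpower p (alpha - 1)).
  replace (Rpower p (2 * alpha - 1)) with (r ^ 2 * p).
  2:{ unfold r. rewrite Rpower_sqr by lra.
      replace (2 * alpha - 1) with (2 * (alpha - 1) + 1) by ring.
      rewrite Rpower_plus, Rpower_1 by lra. reflexivity. }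
  set (a := 3 * (curv_const K ^ 2 + K ^ 2) * r ^ 2 / 4).
  assert (Ha : 0 <= a).
  { pose proof (pow2_ge_0 (curv_const K)). pose proof (pow2_ge_0 K). pose proof (pow2_ge_0 r).
    unfold a. apply Rdiv_le_0_compat; nra. }
  pose proof (div_sqr_le_of_le_mul a c0 N p Ha HN Hp Hc0).
  replace (3 * (curv_const K ^ 2 + K ^ 2) * r ^ 2 / (4 * N ^ 2)) with (a / N ^ 2)
    by (unfold a; field; lra).
  replace (bulk_const K c0 * (r ^ 2 * p / N))
    with (3 * (lip_const K * r) ^ 2 * (p / N) + a / c0 * (p / N))
    by (unfold a, bulk_const; field; lra).
  lra.
Qed.

Lemma envelope_mean_le (alpha K c0 D p N : R) : 0 < alpha < 1 ->
  1 <= N -> 0 < D < p -> p <= 1 -> 0 < c0 <= N * p ->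
  3 * (lip_const K * Rpower p (alpha - 1)) ^ 2 * (p / N)
  + 3 * (curv_const K ^ 2 + K ^ 2) * Rpower p (alpha - 1) ^ 2 / (4 * N ^ 2)
  + (3 * (near_const K * Rpower p alpha) ^ 2
     + 3 * (curv_const K * Rpower D (alpha - 1)) ^ 2 / (4 * N ^ 2))
    * exp (- (tail_rate * (N * p)))
  <= rate_const K c0 * (Rpower p (2 * alpha - 1) / N
                        + 1 / (N ^ 4 * Rpower D (4 - 2 * alpha)) + p / N).
Proof.
  intros Halpha HN HDp Hp Hc0.
  pose proof (bulk_term_le alpha K c0 p N ltac:(lra) ltac:(lra) Hc0).
  pose proof (tail_term_le (near_const K) (curv_const K) alpha D p N
                ltac:(lra) ltac:(lra) ltac:(lra)) as Htail.
  fold (tail_const K) in Htail.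
  replace (1 / (N ^ 4 * Rpower D (4 - 2 * alpha))) with (Rpower D (2 * alpha - 4) / N ^ 4).
  2:{ replace (2 * alpha - 4) with (- (4 - 2 * alpha)) by ring.
      rewrite Rpower_Ropp. pose proof (Rpower_pos D (4 - 2 * alpha)). field. split; lra. }
  pose proof (bulk_const_ge0 K c0 (proj1 Hc0)). pose proof (tail_const_ge0 K).
  assert (0 <= Rpower p (2 * alpha - 1) / N)
    by (apply Rdiv_le_0_compat; [left; apply Rpower_pos | lra]).
  assert (0 <= Rpower D (2 * alpha - 4) / N ^ 4)
    by (apply Rdiv_le_0_compat; [left; apply Rpower_pos | apply pow_lt; lra]).
  assert (0 <= p / N) by (apply Rdiv_le_0_compat; lra).
  unfold rate_const. nra.
Qed.

Lemma add_le_rpower_add_abs A c x y : I01 x -> y <= 0 ->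
  A * Rpower x y + c <= (A + Rabs c) * Rpower x y.
Proof.
  intros Hx Hy. pose proof (Rpower_ge_1 x y Hx Hy). pose proof (Rle_abs c).
  pose proof (Rabs_pos c). nra.
Qed.

Section Estimates.

Variables (alpha : R) (phi : R -> R) (dphi : nat -> R -> R) (K D : R).
Hypothesis Halpha : 0 < alpha < 1.
Hypothesis HK : 0 <= K.
Hypothesis HD : 0 < D <= 1.
Hypothesis Hdphi0 : forall x, I01 x -> dphi 0%nat x = phi x.
Hypothesis Hderiv : forall m x, (m < 4)%nat -> I01 x -> deriv_within01 (dphi m) (dphi (S m) x) x.
Hypothesis Hbound : forall m, (1 <= m <= 4)%nat -> dphi_bound alpha dphi m K.
Hypothesis Hphi : forall y z, 0 < y <= z -> z <= 1 -> Rabs (phi z - phi y) <= K * Rpower z alpha.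

Let pb := phibar phi dphi D.
Let dl m := dphi m D.
Let dr m := dphi m 1.

Lemma hermite_left_abs_le j x : D / 2 <= x <= D ->
  Rabs (hermite j dl D (D / 2 - D) x) <= K * hermite_norm j * Rpower D alpha / (D / 2) ^ j.
Proof.
  intro Hx. pose proof (hermite_abs_le j dl D (D / 2 - D) x D K alpha) as H.
  rewrite (Rabs_left (D / 2 - D)) in H by lra.
  replace (- (D / 2 - D)) with (D / 2) in H by field.
  apply H; try lra; [rewrite Rabs_left1; lra |].
  intros m Hm. apply Hbound; auto.
Qed.

Lemma hermite_right_abs_le j x : 1 <= x <= 2 ->
  Rabs (hermite j dr 1 1 x) <= K * hermite_norm j.
Proof.
  intro Hx. pose proof (hermite_abs_le j dr 1 1 x 1 K alpha) as H.
  rewrite Rabs_R1, pow1, Rpower_1_l in H.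
  replace (K * hermite_norm j) with (K * hermite_norm j * 1 / 1) by field.
  apply H; try lra; [rewrite Rabs_pos_eq; lra |].
  intros m Hm. apply Hbound; auto. unfold I01; lra.
Qed.

Lemma phibar_sub_phi_left x : 0 <= x <= D ->
  Rabs (pb x - phi D) <= K * hermite_norm 0 * Rpower D alpha.
Proof.
  intro Hx. unfold pb.
  assert (H : forall y, D / 2 <= y <= D ->
            Rabs (phi D + hermite 0 dl D (D / 2 - D) y - phi D)
            <= K * hermite_norm 0 * Rpower D alpha).
  { intros y Hy. replace (phi D + _ - phi D) with (hermite 0 dl D (D / 2 - D) y) by ring.
    eapply Rle_trans; [apply hermite_left_abs_le; auto | right; simpl; field]. }
  destruct (Rle_dec x (D / 2)).
  - rewrite phibar_eq_below by lra. apply H. lra.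
  - rewrite phibar_eq_left by lra. apply H. lra.
Qed.

Lemma phibar_lipschitz_left :
  lipschitz_on pb (2 * K * hermite_norm 1 * Rpower D (alpha - 1)) (D / 2) D.
Proof.
  apply (lipschitz_on_ext _ (fun x => phi D + hermite 0 dl D (D / 2 - D) x));
    [intros; now apply phibar_eq_left |].
  apply (lipschitz_on_of_derive _ (hermite 1 dl D (D / 2 - D))).
  - intros t Ht. apply is_derive_hermite_shift. lra.
  - intros t Ht. eapply Rle_trans; [apply hermite_left_abs_le; auto |].
    rewrite Rpower_minus_1 by lra. right. field. lra.
Qed.

Lemma phi_lipschitz y z : 0 < y -> z <= 1 -> lipschitz_on phi (K * Rpower y (alpha - 1)) y z.
Proof.
  intros Hy Hz.
  apply (lipschitz_on_ext _ (dphi 0%nat)); [intros t Ht; symmetry; apply Hdphi0; unfold I01; lra |].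
  apply (lipschitz_on_within01 _ (dphi 1%nat)); auto.
  - intros t Ht. apply Hderiv; auto.
  - intros t Ht. eapply Rle_trans; [apply (Hbound 1); [lia | unfold I01; lra] |].
    simpl INR. apply Rmult_le_compat_l; auto. apply Rpower_le_antitone; lra.
Qed.

Lemma phibar_lipschitz_right : lipschitz_on pb (K * hermite_norm 1) 1 2.
Proof.
  apply (lipschitz_on_ext _ (fun x => phi 1 + hermite 0 dr 1 1 x));
    [intros; now apply phibar_eq_right |].
  apply (lipschitz_on_of_derive _ (hermite 1 dr 1 1)).
  - intros t Ht. apply is_derive_hermite_shift. lra.
  - intros t Ht. apply hermite_right_abs_le. lra.
Qed.

Lemma phibar_lipschitz_above L b : 0 <= L -> lipschitz_on pb L 2 b.
Proof.
  intros HL x y Hx Hy. unfold pb.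
  rewrite (phibar_eq_above _ _ _ HD x), (phibar_eq_above _ _ _ HD y) by lra.
  rewrite Rminus_diag, Rabs_R0. apply Rmult_le_pos; auto using Rabs_pos.
Qed.

Lemma phibar_lipschitz y b : D / 2 <= y <= 1 -> 2 <= b ->
  lipschitz_on pb ((2 * hermite_norm 1 + 1) * K * Rpower y (alpha - 1)) y b.
Proof.
  intros Hy Hb. set (L := (2 * hermite_norm 1 + 1) * K * Rpower y (alpha - 1)).
  pose proof (hermite_norm_ge0 1).
  assert (Hr : 1 <= Rpower y (alpha - 1)) by (apply Rpower_ge_1; lra).
  assert (HKr : K <= K * Rpower y (alpha - 1)) by nra.
  assert (Hmid : forall z, D <= z -> y <= z -> z <= 1 -> lipschitz_on pb L z 1).
  { intros z Hz Hyz Hz1.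
    apply (lipschitz_on_ext _ phi); [intros t Ht; apply phibar_eq_phi; auto; lra |].
    eapply lipschitz_on_le; [| apply phi_lipschitz; lra].
    assert (K * Rpower z (alpha - 1) <= K * Rpower y (alpha - 1))
      by (apply Rmult_le_compat_l; auto; apply Rpower_le_antitone; lra).
    unfold L. nra. }
  apply (lipschitz_on_concat _ _ _ 1); [lra | | apply (lipschitz_on_concat _ _ _ 2); [lra | |]].
  - destruct (Rle_dec y D).
    + apply (lipschitz_on_concat _ _ _ D); [lra | | apply Hmid; lra].
      apply (lipschitz_on_sub _ _ (D / 2) D); try lra.
      eapply lipschitz_on_le; [| apply phibar_lipschitz_left].
      assert (K * hermite_norm 1 * Rpower D (alpha - 1)
              <= K * hermite_norm 1 * Rpower y (alpha - 1))
        by (apply Rmult_le_compat_l; [nra | apply Rpower_le_antitone; lra]).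
      unfold L. nra.
    + apply Hmid; lra.
  - eapply lipschitz_on_le; [| apply phibar_lipschitz_right].
    assert (K * hermite_norm 1 <= K * hermite_norm 1 * Rpower y (alpha - 1))
      by (rewrite <- (Rmult_1_r (K * hermite_norm 1)) at 1; apply Rmult_le_compat_l; nra).
    unfold L. nra.
  - apply phibar_lipschitz_above. unfold L. nra.
Qed.

Lemma phibar_sub_phi_far p x : D < p <= 1 -> p / 2 <= x ->
  Rabs (pb x - phi p) <= lip_const K * Rpower p (alpha - 1) * Rabs (x - p).
Proof.
  intros Hp Hx. unfold lip_const.
  replace (phi p) with (pb p) by (apply phibar_eq_phi; auto; lra).
  pose proof (hermite_norm_ge0 1).
  assert (Hhalf : Rpower (p / 2) (alpha - 1) <= 2 * Rpower p (alpha - 1))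
    by (apply Rpower_half_le; lra).
  pose proof (Rmax_l x 2). pose proof (Rmax_r x 2).
  eapply Rle_trans.
  - apply (phibar_lipschitz (p / 2) (Rmax x 2)); lra.
  - apply Rmult_le_compat_r; [apply Rabs_pos |].
    assert (0 <= (2 * hermite_norm 1 + 1) * K) by nra. nra.
Qed.

Lemma phibar_sub_phi_near p x : D < p <= 1 -> 0 <= x <= p ->
  Rabs (pb x - phi p) <= near_const K * Rpower p alpha.
Proof.
  intros Hp Hx. unfold near_const. pose proof (hermite_norm_ge0 0).
  assert (HDp : Rpower D alpha <= Rpower p alpha) by (apply Rle_Rpower_l; lra).
  destruct (Rle_dec x D).
  - pose proof (phibar_sub_phi_left x ltac:(lra)).
    pose proof (Hphi D p ltac:(lra) ltac:(lra)).
    assert (K * hermite_norm 0 * Rpower D alpha <= K * hermite_norm 0 * Rpower p alpha)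
      by (apply Rmult_le_compat_l; nra).
    pose proof (Rabs_triang (pb x - phi D) (phi D - phi p)).
    rewrite (Rabs_minus_sym (phi D)) in *.
    replace (pb x - phi D + (phi D - phi p)) with (pb x - phi p) in * by ring. nra.
  - unfold pb. rewrite phibar_eq_phi by lra. rewrite Rabs_minus_sym.
    pose proof (Hphi x p ltac:(lra) ltac:(lra)).
    assert (0 <= K * hermite_norm 0 * Rpower p alpha)
      by (pose proof (Rpower_pos p alpha); apply Rmult_le_pos; nra).
    nra.
Qed.

Lemma x_dphi2_abs_le x : I01 x -> Rabs (x * dphi 2%nat x) <= K * Rpower x (alpha - 1).
Proof.
  intro Hx. unfold I01 in Hx.
  assert (H2 := Hbound 2 ltac:(lia) x ltac:(unfold I01; lra)). simpl INR in H2.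
  replace (alpha - (1 + 1)) with (alpha - 1 - 1) in H2 by ring.
  rewrite Rpower_minus_1 in H2 by lra.
  rewrite Rabs_mult, Rabs_pos_eq by lra.
  apply Rle_trans with (x * (K * (Rpower x (alpha - 1) / x))); [apply Rmult_le_compat_l; lra |].
  right. field. lra.
Qed.

Lemma x_phibar2_abs_le x y : 0 < y <= 1 -> y <= x ->
  Rabs (x * phibar2 phi dphi D x) <= (4 * hermite_norm 2 + 1) * K * Rpower y (alpha - 1).
Proof.
  intros Hy Hx. pose proof (hermite_norm_ge0 2).
  set (r := Rpower y (alpha - 1)).
  assert (Hr : 1 <= r) by (apply Rpower_ge_1; lra).
  assert (Hbd : forall z, y <= z -> K * Rpower z (alpha - 1) <= K * r)
    by (intros z Hz; apply Rmult_le_compat_l; auto; apply Rpower_le_antitone; lra).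
  assert (HKS : 0 <= K * hermite_norm 2) by nra.
  assert (Htarget : K * r <= (4 * hermite_norm 2 + 1) * K * r) by nra.
  rewrite Rabs_mult, (Rabs_pos_eq x) by lra.
  destruct (Rlt_dec x (D / 2)) as [Hx1 | Hx1];
    [rewrite phibar2_below by lra; rewrite Rabs_R0; nra |].
  destruct (Rlt_dec x D) as [Hx2 | Hx2].
  - rewrite phibar2_left by lra.
    assert (H2 := hermite_left_abs_le 2 x ltac:(lra)).
    replace (K * hermite_norm 2 * Rpower D alpha / (D / 2) ^ 2)
      with (4 * (K * hermite_norm 2) * Rpower D (alpha - 1) / D) in H2
      by (rewrite Rpower_minus_1 by lra; field; lra).
    apply Rle_trans with (D * (4 * (K * hermite_norm 2) * Rpower D (alpha - 1) / D)).
    + apply Rmult_le_compat; auto using Rabs_pos; lra.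
    + assert (K * hermite_norm 2 * Rpower D (alpha - 1) <= K * hermite_norm 2 * r)
        by (apply Rmult_le_compat_l; auto; apply Rpower_le_antitone; lra).
      replace (D * (4 * (K * hermite_norm 2) * Rpower D (alpha - 1) / D))
        with (4 * (K * hermite_norm 2 * Rpower D (alpha - 1))) by (field; lra).
      nra.
  - destruct (Rlt_dec x 1) as [Hx3 | Hx3].
    + rewrite phibar2_phi by (auto; lra).
      pose proof (x_dphi2_abs_le x ltac:(unfold I01; lra)) as H2.
      rewrite Rabs_mult, (Rabs_pos_eq x) in H2 by lra. specialize (Hbd x Hx). lra.
    + destruct (Rlt_dec x 2) as [Hx4 | Hx4].
      * rewrite phibar2_right by lra.
        assert (H2 := hermite_right_abs_le 2 x ltac:(lra)).
        apply Rle_trans with (2 * (K * hermite_norm 2));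
          [apply Rmult_le_compat; auto using Rabs_pos; lra | nra].
      * rewrite phibar2_above by lra. rewrite Rabs_R0. nra.
Qed.

Lemma x_phibar2_far p x : 0 < p <= 1 -> p / 2 <= x ->
  Rabs (x * phibar2 phi dphi D x) <= curv_const K * Rpower p (alpha - 1).
Proof.
  intros Hp Hx. unfold curv_const. pose proof (hermite_norm_ge0 2).
  eapply Rle_trans; [apply (x_phibar2_abs_le x (p / 2)); lra |].
  assert (0 <= (4 * hermite_norm 2 + 1) * K) by nra.
  assert (Rpower (p / 2) (alpha - 1) <= 2 * Rpower p (alpha - 1)) by (apply Rpower_half_le; lra).
  nra.
Qed.

Lemma x_phibar2_near x : 0 <= x ->
  Rabs (x * phibar2 phi dphi D x) <= curv_const K * Rpower D (alpha - 1).
Proof.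
  intro Hx. unfold curv_const. pose proof (hermite_norm_ge0 2).
  assert (0 <= (4 * hermite_norm 2 + 1) * K) by nra.
  pose proof (Rpower_pos D (alpha - 1)).
  destruct (Rlt_dec x (D / 2)).
  - rewrite phibar2_below, Rmult_0_r, Rabs_R0 by lra. nra.
  - eapply Rle_trans; [apply (x_phibar2_abs_le x (D / 2)); lra |].
    assert (Rpower (D / 2) (alpha - 1) <= 2 * Rpower D (alpha - 1)) by (apply Rpower_half_le; lra).
    nra.
Qed.

Let summand (N p x : R) : R :=
  (pb x - phi p) - x * phibar2 phi dphi D x / (2 * N) + p * dphi 2%nat p / (2 * N).

Lemma summand_sqr_le_far N p x : 1 <= N -> D < p <= 1 -> p / 2 <= x ->
  summand N p x ^ 2
  <= 3 * (lip_const K * Rpower p (alpha - 1)) ^ 2 * (x - p) ^ 2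
     + 3 * (curv_const K ^ 2 + K ^ 2) * Rpower p (alpha - 1) ^ 2 / (4 * N ^ 2).
Proof.
  intros HN Hp Hx.
  assert (HU := sqr_le_of_abs_le _ _ (phibar_sub_phi_far p x Hp Hx)).
  rewrite Rpow_mult_distr, pow2_abs in HU.
  assert (HV := sqr_le_of_abs_le _ _ (x_phibar2_far p x ltac:(lra) Hx)).
  assert (HW := sqr_le_of_abs_le _ _ (x_dphi2_abs_le p ltac:(unfold I01; lra))).
  eapply Rle_trans; [apply (sqr_sub_add_halves_le _ _ _ N _ _ _ ltac:(lra) HU HV HW) |].
  right. field. lra.
Qed.

Lemma summand_sqr_le_near N p x : 1 <= N -> D < p <= 1 -> 0 <= x <= p ->
  summand N p x ^ 2
  <= 3 * (near_const K * Rpower p alpha) ^ 2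
     + 3 * (curv_const K * Rpower D (alpha - 1)) ^ 2 / (4 * N ^ 2)
     + 3 * (K * Rpower p (alpha - 1)) ^ 2 / (4 * N ^ 2).
Proof.
  intros HN Hp Hx.
  assert (HU := sqr_le_of_abs_le _ _ (phibar_sub_phi_near p x Hp Hx)).
  assert (HV := sqr_le_of_abs_le _ _ (x_phibar2_near x ltac:(lra))).
  assert (HW := sqr_le_of_abs_le _ _ (x_dphi2_abs_le p ltac:(unfold I01; lra))).
  eapply Rle_trans; [apply (sqr_sub_add_halves_le _ _ _ N _ _ _ ltac:(lra) HU HV HW) |].
  right. field. lra.
Qed.

(* Off the bulk (k / N < p / 2) the factor exp (N p / 2 - k) is at least 1, while its
   Poisson mean is exponentially small in N p. *)
Lemma summand_sqr_le (N p : R) (k : nat) : 1 <= N -> D < p <= 1 ->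
  (pb (INR k / N) - INR k / (2 * N ^ 2) * phibar2 phi dphi D (INR k / N)
     - phi p + p * dphi 2%nat p / (2 * N)) ^ 2
  <= 3 * (lip_const K * Rpower p (alpha - 1)) ^ 2 * (INR k / N - p) ^ 2
     + 3 * (curv_const K ^ 2 + K ^ 2) * Rpower p (alpha - 1) ^ 2 / (4 * N ^ 2)
     + (3 * (near_const K * Rpower p alpha) ^ 2
        + 3 * (curv_const K * Rpower D (alpha - 1)) ^ 2 / (4 * N ^ 2))
       * exp (N * p / 2 - INR k).
Proof.
  intros HN Hp. set (x := INR k / N).
  set (E := 3 * (near_const K * Rpower p alpha) ^ 2
            + 3 * (curv_const K * Rpower D (alpha - 1)) ^ 2 / (4 * N ^ 2)).
  assert (Hx : 0 <= x) by (apply Rdiv_le_0_compat; [apply pos_INR | lra]).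
  replace (pb x - INR k / (2 * N ^ 2) * phibar2 phi dphi D x - phi p + p * dphi 2%nat p / (2 * N))
    with (summand N p x) by (unfold summand, x; field; lra).
  assert (HE : 0 <= E).
  { pose proof (pow2_ge_0 (near_const K * Rpower p alpha)).
    pose proof (pow2_ge_0 (curv_const K * Rpower D (alpha - 1))).
    assert (0 <= (curv_const K * Rpower D (alpha - 1)) ^ 2 / (4 * N ^ 2))
      by (apply Rdiv_le_0_compat; nra). unfold E. lra. }
  pose proof (exp_pos (N * p / 2 - INR k)).
  destruct (Rle_dec (p / 2) x) as [Hfar | Hnear].
  - pose proof (summand_sqr_le_far N p x HN Hp Hfar).
    assert (0 <= E * exp (N * p / 2 - INR k)) by (apply Rmult_le_pos; lra). lra.
  - assert (Hexp : 1 <= exp (N * p / 2 - INR k)).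
    { assert (INR k <= N * p / 2).
      { apply Rnot_le_lt, (Rmult_lt_compat_r N) in Hnear; [| lra].
        unfold x, Rdiv in Hnear. rewrite Rmult_assoc, Rinv_l, Rmult_1_r in Hnear; lra. }
      pose proof (exp_ineq1_le (N * p / 2 - INR k)). lra. }
    pose proof (summand_sqr_le_near N p x HN Hp ltac:(lra)).
    assert (E <= E * exp (N * p / 2 - INR k))
      by (rewrite <- (Rmult_1_r E) at 1; apply Rmult_le_compat_l; lra).
    set (r := Rpower p (alpha - 1)) in *.
    assert (0 <= 3 * (lip_const K * r) ^ 2 * (x - p) ^ 2)
      by (apply Rmult_le_pos; [pose proof (pow2_ge_0 (lip_const K * r)) | apply pow2_ge_0]; lra).
    assert (3 * (K * r) ^ 2 / (4 * N ^ 2) <= 3 * (curv_const K ^ 2 + K ^ 2) * r ^ 2 / (4 * N ^ 2))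
      by (rewrite Rpow_mult_distr; pose proof (pow2_ge_0 (curv_const K)); pose proof (pow2_ge_0 r);
          unfold Rdiv; apply Rmult_le_compat_r; [left; apply Rinv_0_lt_compat |]; nra).
    unfold E in *. lra.
Qed.

Lemma poisson_var_le_rate (n : nat) (c0 p : R) :
  0 < c0 -> (1 <= n)%nat -> c0 / INR n <= D -> D < p <= 1 ->
  poisson_var (INR n * p)
    (fun k => phibar phi dphi D (INR k / INR n)
              - INR k / (2 * INR n ^ 2) * phibar2 phi dphi D (INR k / INR n)
              - phi p + p * dphi 2%nat p / (2 * INR n))
  <= rate_const K c0 * (Rpower p (2 * alpha - 1) / INR n
                        + 1 / (INR n ^ 4 * Rpower D (4 - 2 * alpha)) + p / INR n).
Proof.
  intros Hc0 Hn HcD Hp.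
  assert (HN : 1 <= INR n) by (apply (le_INR 1); lia).
  assert (HNp : c0 <= INR n * p).
  { apply Rmult_le_compat_l with (r := INR n) in HcD; [| lra].
    replace (INR n * (c0 / INR n)) with c0 in HcD by (field; lra). nra. }
  pose proof (is_series_poisson_envelope (INR n) p
    (3 * (lip_const K * Rpower p (alpha - 1)) ^ 2)
    (3 * (curv_const K ^ 2 + K ^ 2) * Rpower p (alpha - 1) ^ 2 / (4 * INR n ^ 2))
    (3 * (near_const K * Rpower p alpha) ^ 2
     + 3 * (curv_const K * Rpower D (alpha - 1)) ^ 2 / (4 * INR n ^ 2)) ltac:(lra)) as HS.
  refine (Rle_trans _ _ _ (poisson_var_le (INR n * p) _ _ ltac:(nra) _ (ex_intro _ _ HS)) _).
  - intro k. apply summand_sqr_le; lra.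
  - rewrite (is_series_unique _ _ HS). apply envelope_mean_le; lra.
Qed.

End Estimates.

Theorem lemma7 (alpha : R) (phi : R -> R) (dphi : nat -> R -> R) (W c c' : R) :
  0 < alpha < 1 ->
  (forall x, 0 <= x <= 1 -> 0 <= phi x) ->
  (* dphi m = phi^{(m)} on (0,1], phi four times continuously differentiable there *)
  (forall x, I01 x -> dphi 0%nat x = phi x) ->
  (forall m x, (m < 4)%nat -> I01 x -> deriv_within01 (dphi m) (dphi (S m) x) x) ->
  (forall x, I01 x -> cont_within01 (dphi 4%nat) x) ->
  0 < W ->
  (forall x, I01 x ->
     (2 - alpha) * (3 - alpha) * (4 - alpha) * W * Rpower x (alpha - 4) + c'
       <= Rabs (dphi 4%nat x) /\
     Rabs (dphi 4%nat x)
       <= (2 - alpha) * (3 - alpha) * (4 - alpha) * W * Rpower x (alpha - 4) + c) ->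
  forall c0 : R, 0 < c0 ->
  exists C : R, 0 < C /\
  forall (n : nat) (D p : R),
    (1 <= n)%nat -> 0 < D <= 1 -> c0 / INR n <= D -> D < p -> p <= 1 ->
    poisson_var (INR n * p)
      (fun k => phibar phi dphi D (INR k / INR n)
                - INR k / (2 * INR n ^ 2) * phibar2 phi dphi D (INR k / INR n)
                - phi p + p * dphi 2%nat p / (2 * INR n))
    <= C * (Rpower p (2 * alpha - 1) / INR n
            + 1 / (INR n ^ 4 * Rpower D (4 - 2 * alpha))
            + p / INR n).
Proof.
  intros Halpha _ Hdphi0 Hderiv _ _ H4 c0 Hc0.
  set (A := (2 - alpha) * (3 - alpha) * (4 - alpha) * W).
  assert (B4 : dphi_bound alpha dphi 4 (A + Rabs c)).
  { intros x Hx. replace (alpha - INR 4) with (alpha - 4) by (simpl; ring).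
    eapply Rle_trans; [apply (proj2 (H4 x Hx)) | apply add_le_rpower_add_abs; auto; lra]. }
  destruct (dphi_bounds_of_fourth alpha phi dphi Halpha Hdphi0 Hderiv _ B4)
    as (K & HK & Hbound & Hphi).
  exists (rate_const K c0). split; [now apply rate_const_pos |].
  intros n D p Hn HD HcD HDp Hp.
  apply poisson_var_le_rate; auto; lra.
Qed.
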